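(* Let $\delta\ge 2$ and $s\in\{1,\dots,n\}$ with $r:=d_s-\delta+1\ge 1$, let $\tilde d=\sum_{i\ne s}(d_i-1)+d_s-\delta$, and let $d$ be an integer with $1\le d\le\tilde d$. If $d<r$ then $\dim_{\mathbb F_q}\mathcal D^{(\delta,s)}_{\mathcal X}(d)=\dim_{\mathbb F_q}\mathcal C_{\mathcal X}(d)$. If $r\le d\le\tilde d$ then $$\dim_{\mathbb F_q}\mathcal D^{(\delta,s)}_{\mathcal X}(d)=\dim_{\mathbb F_q}\mathcal C_{\mathcal X}(d)-\sum_{i=0}^{\delta-2}\dim_{\mathbb F_q}\mathcal C_{\mathcal X_s}(d-r-i),$$ where $\dim_{\mathbb F_q}\mathcal C_{\mathcal X_s}(e)$ is taken to be $0$ when $e<0$.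
   Context: Let $\mathbb F_q$ be a finite field, $K_1,\dots,K_n\subseteq\mathbb F_q$ nonempty, $d_i=|K_i|$, and $\mathcal X=K_1\times\cdots\times K_n=\{\boldsymbol\alpha_1,\dots,\boldsymbol\alpha_m\}$ (a fixed enumeration), $m=\prod_{i=1}^n d_i$. Let $\Psi:\mathbb F_q[X_1,\dots,X_n]\to\mathbb F_q^m$, $f\mapsto(f(\boldsymbol\alpha_1),\dots,f(\boldsymbol\alpha_m))$. For $d\ge 0$, $\mathbb F_q[X_1,\dots,X_n]_{\le d}$ is the space of polynomials of degree at most $d$ together with $0$. The affine cartesian code is $\mathcal C_{\mathcal X}(d)=\Psi(\mathbb F_q[X_1,\dots,X_n]_{\le d})$. For integers $\delta\ge 2$ and $s\in\{1,\dots,n\}$, $\mathcal P^{(\delta,s)}_d$ is the set of $f\in\mathbb F_q[X_1,\dots,X_n]_{\le d}$ with $\deg_{X_s}f<d_s-\delta+1$, together with $0$; the $(\delta,s)$-quasi affine cartesian code is $\mathcal D^{(\delta,s)}_{\mathcal X}(d)=\Psi(\mathcal P^{(\delta,s)}_d)$. Also $\mathcal X_s=K_1\times\cdots\times K_{s-1}\times K_{s+1}\times\cdots\times K_n\subseteq\mathbb F_q^{n-1}$, and $\mathcal C_{\mathcal X_s}(e)$ is the affine cartesian code of order $e$ defined in the same way over the sets $K_1,\dots,K_{s-1},K_{s+1},\dots,K_n$ (image of polynomials of degree $\le e$ in $n-1$ variables evaluated at the points of $\mathcal X_s$). *)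

From HB Require Import structures.
From mathcomp Require Import all_boot all_order all_algebra all_field.
From mathcomp Require Import mpoly.
From mathcomp Require Import boolp.

Set Implicit Arguments.
Unset Strict Implicit.
Unset Printing Implicit Defensive.

Import GRing.Theory.
Local Open Scope ring_scope.

Section Codes.
Variables (F : finFieldType) (k : nat) (K : 'I_k -> {set F}).

Definition cart_set : {set {ffun 'I_k -> F}} :=
  [set x : {ffun 'I_k -> F} | [forall i, x i \in K i]].

Definition cart_pt (j : 'I_#|cart_set|) : {ffun 'I_k -> F} := enum_val j.

Definition Psi (f : {mpoly F[k]}) : 'rV[F]_#|cart_set| :=
  \row_(j < #|cart_set|) f.@[cart_pt j].

Definition Psi_image (P : {mpoly F[k]} -> Prop) : {set 'rV[F]_#|cart_set|} :=
  [set v | `[< exists f, P f /\ Psi f = v >]].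

(* Dimension over F of a (linear) code, as the dimension of its F-span
   (the code is a subspace, so its span is itself). *)
Definition code_dim (C : {set 'rV[F]_#|cart_set|}) : nat :=
  \dim <<enum C>>%VS.

(* degree of f in the variable X_s (0 for f = 0) *)
Definition degX (s : 'I_k) (f : {mpoly F[k]}) : nat :=
  (\max_(m <- msupp f) m s)%N.

(* Affine cartesian code C_X(d): image of polynomials of total degree <= d
   (msize f = 1 + total degree, 0 for f = 0). *)
Definition cart_code (d : nat) : {set 'rV[F]_#|cart_set|} :=
  Psi_image (fun f => (msize f <= d.+1)%N).

Definition quasi_cart_code (delta : nat) (s : 'I_k) (d : nat)
  : {set 'rV[F]_#|cart_set|} :=
  Psi_image (fun f => (msize f <= d.+1)%N /\
                      (degX s f < #|K s| - delta + 1)%N).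

End Codes.

Definition dimC (F : finFieldType) (k : nat) (K : 'I_k -> {set F}) (d : nat) :=
  code_dim (cart_code K d).

Definition dimD (F : finFieldType) (k : nat) (K : 'I_k -> {set F})
  (delta : nat) (s : 'I_k) (d : nat) :=
  code_dim (quasi_cart_code K delta s d).

(* the family K_1,..,K_{s-1},K_{s+1},..,K_{n} (n = k.+1), defining X_s *)
Definition drop_set (F : finFieldType) (k : nat) (K : 'I_k.+1 -> {set F})
  (s : 'I_k.+1) : 'I_k -> {set F} := fun j => K (lift s j).

From HB Require Import structures.
From mathcomp Require Import all_boot all_order all_algebra all_field.
From mathcomp Require Import mpoly boolp.
From mathcomp Require Import zify.

(* Write N = |X| and ev m in F^N for the evaluation on X of the monomial
   with exponent vector m; call m a box exponent if m_i < |K_i| for all i.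
   1. The N box evaluations form a basis of F^N: every unit vector is the
      evaluation of a product of Lagrange polynomials (whose monomials are
      box monomials), and there are exactly N box exponents.
   2. On X, the vanishing polynomial of K_i lowers an exponent m_i >= |K_i|;
      hence ev m lies in the span of the box evaluations with exponents
      below m, and so stays inside any down-closed exponent set P.
   3. Therefore, if a space of polynomials is spanned by the monomials with
      exponents in a down-closed P, its image under Psi has dimension the
      number of box exponents in P.  Both C_X(d) and D^(delta,s)_X(d) are of
      this form (total degree <= d, resp. also m_s < r).
   4. The box exponents of degree <= d with m_s >= r are counted slice by
      slice m_s = r + i (0 <= i <= delta - 2), each slice being the box
      exponents of X_s of degree <= d - r - i.  This gives
      dim C_X(d) = dim D(d) + sum_i dim C_{X_s}(d - r - i), whence the
      theorem (for d < r every slice is empty). *)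

Set Implicit Arguments.
Unset Strict Implicit.
Unset Printing Implicit Defensive.
Import GRing.Theory.

Section Vanishing.
Variable F : fieldType.
Local Open Scope ring_scope.

Definition vanish (A : seq F) : {poly F} := \prod_(b <- A) ('X - b%:P).

Lemma vanish_eq0 (A : seq F) x : ((vanish A).[x] == 0) = (x \in A).
Proof. exact: root_prod_XsubC. Qed.

(* Power reduction on A: if x is a root of vanish A (which is monic of
   degree c = size A), then x ^+ e rewrites with exponents e - c + l < e. *)
Lemma vanish_power_reduce (A : seq F) x e : x \in A -> (size A <= e)%N ->
  x ^+ e = - \sum_(l < size A) (vanish A)`_l * x ^+ (e - size A + l).
Proof.
move=> xA leAe; set g := vanish A; set c := size A.
have size_g : size g = c.+1 by exact: size_prod_XsubC.
have lead_g : g`_c = 1.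
  by have := monicP (monic_prod_XsubC A xpredT id); rewrite /lead_coef size_g.
have : g.[x] == 0 by rewrite vanish_eq0.
rewrite (horner_coef_wide _ (eq_leq size_g)) big_ord_recr /= lead_g mul1r.
rewrite addr_eq0 => /eqP low.
rewrite -(subnK leAe) exprD -[x ^+ c]opprK -low mulrN mulr_sumr.
congr (- _); apply: eq_bigr => l _.
by rewrite mulrCA -exprD addnK.
Qed.

End Vanishing.

Section MonomialEvaluation.
Variables (F : finFieldType) (n : nat) (K : 'I_n -> {set F}).
Local Open Scope ring_scope.
Local Notation N := #|cart_set K|.
Local Notation q := #|{: F}|.

Definition mono_ev (m : 'I_n -> nat) : 'rV[F]_N :=
  \row_j \prod_i @cart_pt _ _ K j i ^+ m i.

Lemma mono_ev_ext m m' : m =1 m' -> mono_ev m = mono_ev m'.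
Proof.
by move=> eq_m; apply/rowP => j; rewrite !mxE; apply: eq_bigr => i _; rewrite eq_m.
Qed.

Lemma cart_pt_mem j i : @cart_pt _ _ K j i \in K i.
Proof. by have := enum_valP j; rewrite inE => /forallP. Qed.

Lemma cart_pt_eq j j' :
  (j == j') = [forall i, @cart_pt _ _ K j i == @cart_pt _ _ K j' i].
Proof.
apply/eqP/forallP => [-> //|eq_pt]; apply: enum_val_inj.
by apply/ffunP => i; apply/eqP/eq_pt.
Qed.

(* Since |K_i| <= q, exponents below |K_i| fit in 'I_q; a box exponent is
   a t : 'I_n -> 'I_q with t i < |K_i| for every i. *)
Definition in_box (t : {ffun 'I_n -> 'I_q}) : bool := [forall i, t i < #|K i|]%N.
Definition expo (t : {ffun 'I_n -> 'I_q}) : 'I_n -> nat := fun i => t i.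
Definition box_exps : seq {ffun 'I_n -> 'I_q} := enum [pred t | in_box t].

Definition box_ev (P : pred ('I_n -> nat)) : seq 'rV[F]_N :=
  [seq mono_ev (expo t) | t <- box_exps & P (expo t)].

Definition box_count (P : pred ('I_n -> nat)) : nat :=
  (\sum_t (in_box t && P (expo t)))%N.

Lemma size_box_ev P : size (box_ev P) = box_count P.
Proof.
rewrite size_map size_filter -sum1_count big_enum_cond big_mkcond.
by apply: eq_bigr => t _; rewrite inE; case: (in_box t).
Qed.

Lemma card_ord_lt c : (c <= q)%N -> #|[pred l : 'I_q | l < c]%N| = c.
Proof.
move=> le_cq; transitivity (\sum_(l < c) 1)%N.
  by rewrite -sum1_card (big_ord_widen_cond _ xpredT (fun _ => 1%N) le_cq).
by rewrite big_const_ord iter_addn_0 mul1n.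
Qed.

Lemma card_box : #|[pred t | in_box t]| = N.
Proof.
have -> : #|[pred t | in_box t]| = #|family (fun i => [pred l : 'I_q | l < #|K i|]%N)|.
  by apply: eq_card => t; rewrite !inE.
have -> : N = #|family (fun i => mem (K i))|.
  by apply: eq_card => t; rewrite !inE.
rewrite !card_family; congr foldr; apply: eq_map => i.
by rewrite card_ord_lt ?max_card.
Qed.

Definition lagrange i (a : F) : {poly F} :=
  (vanish (enum (K i :\ a))).[a]^-1 *: vanish (enum (K i :\ a)).

Lemma size_lagrange i a : a \in K i -> (size (lagrange i a) <= #|K i|)%N.
Proof.
move=> aK; apply: leq_trans (size_scale_leq _ _) _.
by rewrite size_prod_XsubC -cardE (cardsD1 a (K i)) aK.
Qed.

Lemma lagrangeE i a x : a \in K i -> x \in K i -> (lagrange i a).[x] = (x == a)%:R.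
Proof.
move=> aK xK; rewrite hornerZ; case: eqP => [->|/eqP neq_xa].
  by rewrite mulVf // vanish_eq0 mem_enum !inE eqxx.
by apply/eqP; rewrite mulf_eq0 vanish_eq0 mem_enum !inE neq_xa xK orbT.
Qed.

Lemma prod_horner_expand (p : 'I_n -> {poly F}) (x : 'I_n -> F) :
  (forall i, size (p i) <= q)%N ->
  \prod_i (p i).[x i] =
    \sum_(t : {ffun 'I_n -> 'I_q}) \prod_i ((p i)`_(t i) * x i ^+ t i).
Proof.
move=> size_p.
rewrite -(bigA_distr_bigA (fun i (l : 'I_q) => (p i)`_l * x i ^+ l)).
by apply: eq_bigr => i _; rewrite (horner_coef_wide _ (size_p i)).
Qed.

(* Every unit vector is the evaluation of a product of Lagrange polynomials,
   whose monomials all have box exponents. *)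
Lemma unit_vector_in_span j : delta_mx 0 j \in <<box_ev predT>>%VS.
Proof.
pose a := @cart_pt _ _ K j; pose L i := lagrange i (a i).
pose c (t : {ffun 'I_n -> 'I_q}) := \prod_i (L i)`_(t i).
have size_L i : (size (L i) <= #|K i|)%N by apply/size_lagrange/cart_pt_mem.
have -> : delta_mx 0 j = \sum_t c t *: mono_ev (expo t).
  apply/rowP => j'; rewrite !mxE summxE.
  under eq_bigr do rewrite !mxE -big_split.
  rewrite -(@prod_horner_expand L (fun i => @cart_pt _ _ K j' i)); last first.
    by move=> i; apply: leq_trans (size_L i) (max_card _).
  rewrite (eq_bigr (fun i => (@cart_pt _ _ K j' i == a i)%:R)); last first.
    by move=> i _; rewrite lagrangeE ?cart_pt_mem.
  rewrite cart_pt_eq; case: (boolP [forall i, _]) => [/forallP eq_pt|].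
    by rewrite big1 // => i _; rewrite eq_pt.
  by case/forallPn => i /negPf neq_i; rewrite (bigD1 i) //= neq_i mul0r.
apply: memv_suml => t _; case: (boolP (in_box t)) => [box_t|/forallPn [i]].
  by apply/memvZ/memv_span/map_f; rewrite mem_filter mem_enum.
rewrite -leqNgt => ge_ti; suff -> : c t = 0 by rewrite scale0r mem0v.
apply/eqP/prodf_eq0; exists i => //.
by rewrite nth_default //; apply: leq_trans (size_L i) ge_ti.
Qed.

Lemma span_box_ev : <<box_ev predT>>%VS = fullv.
Proof.
apply/eqP; rewrite eqEsubv subvf /=; apply/subvP => w _.
rewrite (matrix_sum_delta w) big_ord1; apply: memv_suml => j _.
exact/memvZ/unit_vector_in_span.
Qed.

Lemma free_box_ev P : free (box_ev P).
Proof.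
have free_all : free (box_ev predT).
  rewrite /free span_box_ev dimvf dim_matrix mul1r size_map filter_predT.
  by rewrite -cardE card_box.
set Q := fun t => P (expo t).
have split_exps :
    perm_eq ([seq t <- box_exps | Q t] ++ [seq t <- box_exps | predC Q t]) box_exps.
  by rewrite perm_filterC.
move: free_all; rewrite /box_ev filter_predT -(perm_free (perm_map _ split_exps)).
by rewrite map_cat; apply: catl_free.
Qed.

Definition set_exp (m : 'I_n -> nat) i e : 'I_n -> nat :=
  fun i' => if i' == i then e else m i'.

(* An exponent m_i >= |K_i| can be lowered, on X, using the polynomial of
   degree |K_i| vanishing on K_i. *)
Lemma mono_ev_reduce m i : (#|K i| <= m i)%N ->
  mono_ev m = - \sum_(l < #|K i|)
     (vanish (enum (K i)))`_l *: mono_ev (set_exp m i (m i - #|K i| + l)).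
Proof.
rewrite [#|K i|]cardE => le_Km; apply/rowP => j; rewrite !mxE summxE.
set x := @cart_pt _ _ K j; set R := \prod_(i' | i' != i) x i' ^+ m i'.
have prod_set_exp e : \prod_i' x i' ^+ set_exp m i e i' = x i ^+ e * R.
  rewrite (bigD1 i) //= /set_exp eqxx; congr (_ * _).
  by apply: eq_bigr => i' /negPf ->.
under [in RHS]eq_bigr do rewrite !mxE prod_set_exp mulrA.
rewrite -mulr_suml -mulNr (bigD1 i) //=; congr (_ * _).
have x_root : x i \in enum (K i) by rewrite mem_enum cart_pt_mem.
exact: vanish_power_reduce x_root le_Km.
Qed.

Definition down_closed (P : pred ('I_n -> nat)) :=
  forall m m', (forall i, m' i <= m i)%N -> P m -> P m'.

Lemma mono_ev_in_span P m : down_closed P -> P m -> mono_ev m \in <<box_ev P>>%VS.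
Proof.
move=> downP; have [b] : exists b, (\sum_i m i < b)%N by exists (\sum_i m i).+1.
elim: b m => [//|b IH] m lt_mb Pm.
have [/forallP m_box|/forallPn [i]] := boolP [forall i, m i < #|K i|]%N.
  have lt_mq i : (m i < q)%N by apply: leq_trans (m_box i) (max_card _).
  pose t := [ffun i => Ordinal (lt_mq i)].
  rewrite (@mono_ev_ext m (expo t)) => [|i]; last by rewrite /expo ffunE.
  have Pt : P (expo t) by apply: downP Pm => i; rewrite /expo ffunE.
  apply/memv_span/map_f; rewrite mem_filter mem_enum inE Pt.
  by apply/forallP => i; rewrite ffunE /= m_box.
rewrite -leqNgt => le_Km; rewrite (mono_ev_reduce le_Km) memvN.
apply: memv_suml => l _; apply: memvZ.
have lt_exp : (m i - #|K i| + l < m i)%N by rewrite -ltn_subRL subKn.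
have set_exp_le i' : (set_exp m i (m i - #|K i| + l) i' <= m i')%N.
  by rewrite /set_exp; case: eqP => [->|//]; apply: ltnW.
apply: IH; last exact: downP _ _ set_exp_le Pm.
rewrite -ltnS; apply: leq_trans lt_mb; rewrite ltnS.
rewrite (bigD1 i) //= [in X in (_ < X)%N](bigD1 i) //= /set_exp eqxx.
by rewrite (eq_bigr m) => [|i' /negPf -> //]; rewrite ltn_add2r.
Qed.

Lemma Psi_mono_ev (f : {mpoly F[n]}) :
  Psi K f = \sum_(m <- msupp f) f@_m *: mono_ev (fun i => m i).
Proof.
apply/rowP => j; rewrite !mxE mevalE summxE.
by apply: eq_bigr => m _; rewrite !mxE.
Qed.

Lemma Psi_monomial (m : 'X_{1..n}) : Psi K 'X_[m] = mono_ev (fun i => m i).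
Proof. by apply/rowP => j; rewrite !mxE mevalX. Qed.

Lemma dim_Psi_image (Pp : {mpoly F[n]} -> Prop) (P : pred ('I_n -> nat)) :
  down_closed P ->
  (forall f, Pp f -> forall m, m \in msupp f -> P (fun i => m i)) ->
  (forall m : 'X_{1..n}, P (fun i => m i) -> Pp 'X_[m]) ->
  code_dim (Psi_image K Pp) = box_count P.
Proof.
move=> downP supp_P mono_Pp; rewrite /code_dim -size_box_ev.
suff -> : <<enum (Psi_image K Pp)>>%VS = <<box_ev P>>%VS.
  exact/eqP/free_box_ev.
apply/eqP; rewrite eqEsubv; apply/andP; split; apply/span_subvP => v.
  rewrite mem_enum inE => /asboolP [f [Pf <-]].
  rewrite Psi_mono_ev big_seq; apply: memv_suml => m mf; apply: memvZ.
  exact: mono_ev_in_span downP (supp_P f Pf m mf).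
case/mapP => t; rewrite mem_filter => /andP [Pt _] ->.
apply: memv_span; rewrite mem_enum inE; apply/asboolP.
exists 'X_[[multinom expo t i | i < n]]; rewrite Psi_monomial; split.
  by apply: mono_Pp; apply: downP Pt => i; rewrite mnmE.
by apply: mono_ev_ext => i; rewrite mnmE.
Qed.

End MonomialEvaluation.

Section CodeDimensions.
Variables (F : finFieldType) (n : nat) (K : 'I_n -> {set F}).

Definition deg_le (d : nat) (m : 'I_n -> nat) : bool := (\sum_i m i <= d)%N.

Lemma deg_le_down d m m' : (forall i, m' i <= m i)%N -> deg_le d m -> deg_le d m'.
Proof. by move=> le_m'm; apply: leq_trans; apply: leq_sum => i _. Qed.

Lemma dimC_box_count d : dimC K d = box_count K (deg_le d).
Proof.
apply: dim_Psi_image => [m m'|f deg_f m mf|m]; first exact: deg_le_down.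
  by rewrite /deg_le -mdegE -ltnS; apply: leq_trans (msize_mdeg_lt mf) deg_f.
by rewrite msizeX ltnS mdegE.
Qed.

Lemma dimD_box_count delta s d :
  dimD K delta s d =
  box_count K (fun m => deg_le d m && (m s < #|K s| - delta + 1)%N).
Proof.
apply: dim_Psi_image => [m m' le_m'm /andP [deg_m lt_ms]|f [deg_f degX_f] m mf|m].
- by rewrite (deg_le_down le_m'm deg_m); apply: leq_ltn_trans (le_m'm s) lt_ms.
- apply/andP; split.
    by rewrite /deg_le -mdegE -ltnS; apply: leq_trans (msize_mdeg_lt mf) deg_f.
  apply: leq_ltn_trans degX_f.
  exact: (@leq_bigmax_seq _ _ xpredT (fun m0 : 'X_{1..n} => m0 s) m mf).
- move=> /andP [deg_m lt_ms]; split; first by rewrite msizeX ltnS mdegE.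
  by rewrite /degX msuppX big_seq1.
Qed.

Lemma box_count_predC (P Q : pred ('I_n -> nat)) :
  box_count K P =
  (box_count K (fun m => P m && Q m) + box_count K (fun m => P m && ~~ Q m))%N.
Proof.
rewrite /box_count -big_split; apply: eq_bigr => t _.
by case: (in_box K t); case: (P _); case: (Q _).
Qed.

End CodeDimensions.

Lemma sum_ord_shift (f : nat -> nat) (R : pred nat) r L :
  (\sum_(a < r + L | (r <= a) && R a) f a = \sum_(i < L | R (r + i)) f (r + i))%N.
Proof.
rewrite -(big_mkord (fun a => (r <= a) && R a) f).
rewrite -(big_mkord (fun i => R (r + i)) (fun i => f (r + i))).
rewrite (big_cat_nat (leq0n r) (leq_addr L r)) /=.
rewrite big_nat_cond big1 ?add0n => [|a /andP [/andP [_ lt_ar]]]; last first.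
  by rewrite leqNgt lt_ar.
rewrite -{1}[r]add0n big_addn addKn; apply: eq_big => [i|i _]; last by rewrite addnC.
by rewrite leq_addl addnC.
Qed.

Section Slicing.
Variables (F : finFieldType) (k : nat) (K : 'I_k.+1 -> {set F}) (s : 'I_k.+1).
Local Notation q := #|{: F}|.
Local Notation K' := (drop_set K s).

Definition ins_exp (a : 'I_q) (u : {ffun 'I_k -> 'I_q}) : {ffun 'I_k.+1 -> 'I_q} :=
  [ffun i => if unlift s i is Some i' then u i' else a].

Lemma ins_exp_s a u : ins_exp a u s = a.
Proof. by rewrite ffunE unlift_none. Qed.

Lemma ins_exp_lift a u i : ins_exp a u (lift s i) = u i.
Proof. by rewrite ffunE liftK. Qed.

Lemma sum_ins_exp (G : {ffun 'I_k.+1 -> 'I_q} -> nat) :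
  (\sum_t G t = \sum_(a : 'I_q) \sum_(u : {ffun 'I_k -> 'I_q}) G (ins_exp a u))%N.
Proof.
rewrite pair_big /=; apply: (reindex (fun p => ins_exp p.1 p.2)).
pose prj (t : {ffun 'I_k.+1 -> 'I_q}) := (t s, [ffun i => t (lift s i)]).
exists prj => [[a u] _|t _].
  by rewrite /prj ins_exp_s; congr pair; apply/ffunP => i; rewrite ffunE ins_exp_lift.
by apply/ffunP => i; rewrite ffunE; case: unliftP => [j ->|->]; rewrite ?ffunE.
Qed.

Lemma in_box_ins_exp a u : in_box K (ins_exp a u) = (a < #|K s|)%N && in_box K' u.
Proof.
apply/forallP/andP => [box_au|[lt_a /forallP box_u] i].
  split; first by have := box_au s; rewrite ins_exp_s.
  by apply/forallP => i; have := box_au (lift s i); rewrite ins_exp_lift.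
by case: (unliftP s i) => [j ->|->]; rewrite ?ins_exp_lift ?ins_exp_s ?box_u.
Qed.

Lemma deg_le_ins_exp d a u :
  deg_le d (expo (ins_exp a u)) = (a <= d)%N && deg_le (d - a) (expo u).
Proof.
rewrite /deg_le; have -> : (\sum_i expo (ins_exp a u) i = a + \sum_i expo u i)%N.
  rewrite (bigD1_ord s) //= /expo ins_exp_s; congr addn.
  by apply: eq_bigr => i _; rewrite ins_exp_lift.
case: (leqP a d) => [le_ad|lt_da]; first by rewrite leq_subRL.
by apply/negbTE; rewrite -ltnNge ltn_addr.
Qed.

Lemma box_count_slice (Q : pred nat) d :
  box_count K (fun m => deg_le d m && Q (m s)) =
  (\sum_(a < #|K s| | Q a && (a <= d)) box_count K' (deg_le (d - a)))%N.
Proof.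
have le_Ks_q : (#|K s| <= q)%N by apply: max_card.
rewrite (big_ord_widen_cond q (fun a => Q a && (a <= d))%N
  (fun a => box_count K' (deg_le (d - a))) le_Ks_q) big_mkcond /=.
rewrite /box_count sum_ins_exp; apply: eq_bigr => a _.
rewrite (eq_bigr (fun u => nat_of_bool [&& Q a, a <= d, a < #|K s|, in_box K' u
                                 & deg_le (d - a) (expo u)])%N) => [|u _]; last first.
  rewrite in_box_ins_exp deg_le_ins_exp {2}/expo ins_exp_s.
  by case: (Q a); case: (a <= d)%N; case: (a < #|K s|)%N; rewrite /= ?andbT ?andbF.
case: ifP => [/andP [/andP [Qa le_ad] lt_a]|/negbT cond_a].
  by apply: eq_bigr => u _; rewrite Qa le_ad lt_a.
rewrite big1 // => u _; apply/eqP; rewrite eqb0.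
by apply: contra cond_a => /and5P [-> -> -> _ _].
Qed.

Lemma dimC_decomposition delta d : (0 < delta)%N -> (delta <= #|K s|)%N ->
  let r := (#|K s| - delta + 1)%N in
  dimC K d = (dimD K delta s d +
    \sum_(i < delta.-1) (if (r + i <= d)%N then dimC K' (d - r - i) else 0%N))%N.
Proof.
move=> gt0_delta le_delta r.
rewrite dimC_box_count dimD_box_count (box_count_predC _ _ (fun m => m s < r)%N).
congr addn; rewrite (box_count_slice (fun a => ~~ (a < r))%N).
have -> : #|K s| = (r + delta.-1)%N by rewrite /r; lia.
rewrite (eq_bigl (fun a : 'I_(r + delta.-1) => (r <= a)%N && (a <= d)%N)) => [|a].
  rewrite (sum_ord_shift (fun a => box_count K' (deg_le (d - a))) (fun a => a <= d)%N).
  rewrite big_mkcond; apply: eq_bigr => i _.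
  by rewrite dimC_box_count subnDA.
by rewrite -leqNgt.
Qed.

End Slicing.

Unset Implicit Arguments.

(* n variables is written here as k.+1 (n >= 1 since s in {1..n}). *)
Theorem mainTheorem4 (F : finFieldType) (k : nat) (K : 'I_k.+1 -> {set F})
  (delta : nat) (s : 'I_k.+1) (d : nat) :
  (forall i, K i != set0) ->
  (2 <= delta)%N ->
  (1 <= #|K s| - delta + 1)%N ->
  (delta <= #|K s|)%N ->
  let r := (#|K s| - delta + 1)%N in
  let dtilde := ((\sum_(i < k.+1 | i != s) (#|K i| - 1)) + (#|K s| - delta))%N in
  (1 <= d)%N -> (d <= dtilde)%N ->
  ((d < r)%N -> dimD K delta s d = dimC K d) /\
  ((r <= d)%N ->
     (dimD K delta s d)%:Z =
       (dimC K d)%:Z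
       - (\sum_(i < delta.-1)
            (if (r + i <= d)%N then dimC (drop_set K s) (d - r - i) else 0%N))%:Z)%R.
Proof.
move=> _ le2_delta _ le_delta r _ _ _.
have decomp := dimC_decomposition d (ltnW le2_delta) le_delta.
split => [lt_dr|_]; last by rewrite decomp PoszD addrK.
rewrite decomp big1 ?addn0 // => i _; rewrite ifF //.
by apply/negbTE; rewrite -ltnNge ltn_addr.
Qed.
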